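(* Under the setup in the context, for every arm $j\in\{1,\dots,K\}$ and every $\delta>0$, $$\bigcup_{i=1}^{\infty}\bigl\{|\tilde\mu_{j,i}-\mu_j|>U(i,\delta)\bigr\}\;\subseteq\;\bigcup_{i=1}^{\infty}\bigl\{|\hat\mu_{j,i}-\mu_j|>U'(i,\delta)\bigr\}.$$
   Context: There are $K$ arms. For each arm $j\in[K]=\{1,\dots,K\}$, the rewards $r_{j,1},r_{j,2},\dots$ are i.i.d. real random variables with values in a fixed interval $[a,b]$ and mean $\mu_j$, and they are $\sigma^2$-subgaussian in the sense that $\mathbb P(|r_{j,k}-\mu_j|>t)\le 2e^{-t^2/(2\sigma^2)}$ for all $t>0$. Rewards of different arms are independent. Fix integers $B\ge 1$ and $\alpha\ge 2$, and set $t_i=\alpha^i$ for $i\ge1$. For $\delta>0$ and $i\ge 1$ define $$U'(i,\delta)=\sigma\sqrt{\frac{2\log(4Kt_i^2/\delta)}{t_i}},$$ and define $U(i,\delta)$ recursively by $U(0,\delta)=b-a$ and $$U(i,\delta)=\frac{1}{2^B}\bigl[U'(i,\delta)+U(i-1,\delta)\bigr]+U'(i,\delta)\quad(i\ge1).$$ Let $\hat\mu_{j,i}=\frac1{t_i}\sum_{k=1}^{t_i}r_{j,k}$ be the empirical mean of the first $t_i$ rewards of arm $j$. Quantizer: for a real interval $[\ell,u]$, divide it into $2^B$ consecutive bins of equal width $(u-\ell)/2^B$; for any $x\in\mathbb R$ (whether or not $x\in[\ell,u]$), $Q_{[\ell,u]}(x)$ denotes the midpoint of a bin whose midpoint is nearest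 to $x$ (so $|Q_{[\ell,u]}(x)-x|\le (u-\ell)/2^{B+1}$ whenever $x\in[\ell,u]$). Decoded estimates: $\tilde\mu_{j,0}$ is drawn uniformly from $[a,b]$, and for $i\ge1$, $$\tilde\mu_{j,i}=Q_{I_{j,i}}(\hat\mu_{j,i}),\qquad I_{j,i}=\bigl[\tilde\mu_{j,i-1}-U(i-1,\delta)-U'(i,\delta),\ \tilde\mu_{j,i-1}+U(i-1,\delta)+U'(i,\delta)\bigr].$$ *)

From HB Require Import structures.
From mathcomp Require Import all_boot all_order all_algebra.
From mathcomp Require Import all_classical all_reals all_analysis.
Set Implicit Arguments. Unset Strict Implicit. Unset Printing Implicit Defensive.
Import Order.TTheory GRing.Theory Num.Theory.
Local Open Scope classical_set_scope.
Local Open Scope ring_scope.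

Section Defs.
Variable R : realType.

Definition tt (alpha i : nat) : nat := (alpha ^ i)%N.

Definition Uprime (K alpha : nat) (sigma delta : R) (i : nat) : R :=
  sigma * Num.sqrt (2 * ln (4 * K%:R * ((tt alpha i)%:R ^+ 2) / delta)
                    / (tt alpha i)%:R).

Fixpoint Ubound (K alpha B : nat) (a b sigma delta : R) (i : nat) : R :=
  match i with
  | 0 => b - a
  | i'.+1 => (Uprime K alpha sigma delta i'.+1
               + Ubound K alpha B a b sigma delta i') / (2 ^+ B)
             + Uprime K alpha sigma delta i'.+1
  end.

Definition bin_mid (B : nat) (l u : R) (k : nat) : R :=
  l + (k%:R + 2^-1) * ((u - l) / 2 ^+ B).

(* Q is a B-bit quantizer: Q l u x is the midpoint of a bin of [l,u] whose
   midpoint is nearest to x (any tie-breaking rule allowed). *)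
Definition is_quantizer (B : nat) (Q : R -> R -> R -> R) : Prop :=
  forall l u x, exists2 k : nat, (k < 2 ^ B)%N &
    Q l u x = bin_mid B l u k /\
    forall k' : nat, (k' < 2 ^ B)%N -> `|Q l u x - x| <= `|bin_mid B l u k' - x|.

(* empirical mean of the first t_i rewards; rew k is the (k+1)-th reward *)
Definition hatmu (alpha : nat) (rew : nat -> R) (i : nat) : R :=
  (\sum_(k < tt alpha i) rew k) / (tt alpha i)%:R.

Fixpoint tildemu (K alpha B : nat) (a b sigma delta : R)
    (Q : R -> R -> R -> R) (rew : nat -> R) (t0 : R) (i : nat) : R :=
  match i with
  | 0 => t0
  | i'.+1 =>
      let p := tildemu K alpha B a b sigma delta Q rew t0 i' in
      let w := Ubound K alpha B a b sigma delta i'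
               + Uprime K alpha sigma delta i'.+1 in
      Q (p - w) (p + w) (hatmu alpha rew i'.+1)
  end.

End Defs.

Definition mutually_independent d (T : measurableType d) (R : realType)
    (P : probability T R) (I : eqType) (X : I -> T -> R) : Prop :=
  forall (s : seq I) (Bs : I -> set R), uniq s ->
    (forall i, measurable (Bs i)) ->
    P (\bigcap_(i in [set` s]) (X i @^-1` Bs i)) =
    (\prod_(i <- s) P (X i @^-1` Bs i))%E.

From HB Require Import structures.
From mathcomp Require Import all_boot all_order all_algebra.
From mathcomp Require Import all_classical all_reals all_analysis.
From mathcomp Require Import ring lra.
Set Implicit Arguments. Unset Strict Implicit. Unset Printing Implicit Defensive.
Import Order.TTheory GRing.Theory Num.Theory.
Local Open Scope classical_set_scope.
Local Open Scope ring_scope.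

(* The inclusion holds outcome by outcome, so none of the probabilistic
   hypotheses are needed; only the ranges of the rewards and of tilde mu_0,
   and the defining property of the quantizer.  We prove the contrapositive:
   if an outcome satisfies |hat mu_i - mu| <= U'(i) for every i >= 1, then
   |tilde mu_i - mu| <= U(i) for every i >= 1, by induction on i. *)

Lemma bin_index_exists (R : realFieldType) (N : nat) (y : R) :
  (0 < N)%N -> 0 <= y <= N%:R -> exists2 k : nat, (k < N)%N & k%:R <= y <= k%:R + 1.
Proof.
elim: N => // -[|N] IH _ /andP[y_ge0 y_leN].
  by exists 0%N => //; rewrite add0r y_ge0.
have [y_le|y_gt] := lerP y N.+1%:R.
  by have [k kN hk] := IH isT (introT andP (conj y_ge0 y_le)); exists k => //; apply: ltnW.
by exists N.+1 => //; rewrite (ltW y_gt) -natr1 in y_leN *.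
Qed.

Lemma bin_mid_near (R : realType) (B : nat) (l u x : R) :
  l <= x <= u ->
  exists2 k : nat, (k < 2 ^ B)%N & `|bin_mid B l u k - x| <= (u - l) / 2 ^+ B.+1.
Proof.
move=> /andP[lx xu].
have bins_gt0 : (0 < 2 ^ B)%N by rewrite expn_gt0.
have pow_gt0 : (0 : R) < 2 ^+ B by rewrite exprn_gt0.
have [lu|ul] := eqVneq l u.
  exists 0%N => //; rewrite -lu in xu; have xl : x = l by apply/eqP; rewrite eq_le xu lx.
  by rewrite /bin_mid xl -lu subrr mul0r mulr0 addr0 subrr normr0 mul0r.
have lu : l < u by rewrite lt_neqAle ul (le_trans lx xu).
set h := (u - l) / 2 ^+ B.
have h_gt0 : 0 < h by rewrite divr_gt0 // subr_gt0.
have half_h : (u - l) / 2 ^+ B.+1 = 2^-1 * h.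
  by rewrite /h exprSr; field; rewrite gt_eqF.
set y := (x - l) / h.
have xE : x = l + y * h by rewrite /y divfK ?gt_eqF //; ring.
have y_range : 0 <= y <= (2 ^ B)%:R.
  rewrite /y divr_ge0 ?subr_ge0 ?(ltW h_gt0) //= ler_pdivrMr //.
  by rewrite /h natrX mulrCA divff ?gt_eqF // mulr1 lerB.
have [k kN /andP[ky yk]] := bin_index_exists bins_gt0 y_range.
exists k => //; rewrite /bin_mid -/h xE half_h.
have -> : l + (k%:R + 2^-1) * h - (l + y * h) = (k%:R + 2^-1 - y) * h by ring.
rewrite normrM (gtr0_norm h_gt0) ler_pM2r // ler_norml.
by apply/andP; split; lra.
Qed.

Lemma quantizer_error (R : realType) (B : nat) (Q : R -> R -> R -> R) (l u x : R) :
  is_quantizer B Q -> l <= x <= u -> `|Q l u x - x| <= (u - l) / 2 ^+ B.+1.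
Proof.
move=> hQ x_in; have [k _ [_ nearest]] := hQ l u x.
have [k' k'_lt near_k'] := bin_mid_near B x_in.
exact: le_trans (nearest k' k'_lt) near_k'.
Qed.

Lemma quantize_track (R : realType) (B : nat) (Q : R -> R -> R -> R) (p w x m : R) :
  is_quantizer B Q -> `|x - p| <= w ->
  `|Q (p - w) (p + w) x - m| <= w / 2 ^+ B + `|x - m|.
Proof.
move=> hQ x_near.
have x_in : p - w <= x <= p + w by move: x_near; rewrite ler_distl.
have -> : Q (p - w) (p + w) x - m = (Q (p - w) (p + w) x - x) + (x - m) by ring.
apply: le_trans (ler_normD _ _) _; rewrite lerD2r.
have -> : w / 2 ^+ B = (p + w - (p - w)) / 2 ^+ B.+1.
  by rewrite exprSr; field; rewrite gt_eqF // exprn_gt0.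
exact: quantizer_error.
Qed.

Lemma hatmu_range (R : realType) (alpha : nat) (rew : nat -> R) (a b : R) (i : nat) :
  (0 < alpha)%N -> (forall k, a <= rew k <= b) -> a <= hatmu alpha rew i <= b.
Proof.
move=> alpha_gt0 rew_ab.
have t_gt0 : (0 : R) < (tt alpha i)%:R by rewrite ltr0n expn_gt0 alpha_gt0.
have constE c : c * (tt alpha i)%:R = \sum_(k < tt alpha i) c.
  by rewrite sumr_const card_ord mulr_natr.
rewrite /hatmu ler_pdivlMr // ler_pdivrMr // !constE.
by apply/andP; split; apply: ler_sum => k _; case/andP: (rew_ab k).
Qed.

Lemma Uprime_ge0 (R : realType) (K alpha : nat) (sigma delta : R) (i : nat) :
  0 <= sigma -> 0 <= Uprime K alpha sigma delta i.
Proof. by move=> sigma_ge0; rewrite /Uprime mulr_ge0 ?sqrtr_ge0. Qed.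

Lemma tildemu_tracks (R : realType) (K alpha B : nat) (a b sigma delta : R)
    (Q : R -> R -> R -> R) (rew : nat -> R) (t0 m : R) :
  0 <= sigma -> (0 < alpha)%N -> is_quantizer B Q ->
  (forall k, a <= rew k <= b) -> a <= t0 <= b ->
  (forall i, (0 < i)%N -> `|hatmu alpha rew i - m| <= Uprime K alpha sigma delta i) ->
  forall i, (0 < i)%N ->
  `|tildemu K alpha B a b sigma delta Q rew t0 i - m| <= Ubound K alpha B a b sigma delta i.
Proof.
move=> sigma_ge0 alpha_gt0 hQ rew_ab t0_ab hat_near.
elim=> // i IH _; rewrite /= [Uprime _ _ _ _ _ + _]addrC.
set p := tildemu K alpha B a b sigma delta Q rew t0 i.
set w := Ubound K alpha B a b sigma delta i + Uprime K alpha sigma delta i.+1.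
have window : `|hatmu alpha rew i.+1 - p| <= w.
  case: i IH @p @w => [_ /= | i IH p w].
    have /andP[ha hb] := hatmu_range 1 alpha_gt0 rew_ab.
    have := Uprime_ge0 K alpha delta 1 sigma_ge0.
    by case/andP: t0_ab; rewrite ler_distl => *; apply/andP; split; lra.
  have -> : hatmu alpha rew i.+2 - tildemu K alpha B a b sigma delta Q rew t0 i.+1
    = (hatmu alpha rew i.+2 - m) - (tildemu K alpha B a b sigma delta Q rew t0 i.+1 - m).
    by ring.
  rewrite [X in _ <= X]addrC; apply: le_trans (ler_normB _ _) _.
  by apply: lerD; [exact: hat_near | exact: IH].
apply: (le_trans (quantize_track m hQ window)).
by rewrite lerD2l; apply: hat_near.
Qed.

Theorem lemma1 (R : realType) (d : measure_display) (T : measurableType d)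
    (P : probability T R) (K : nat) (a b sigma : R) (mu : 'I_K -> R)
    (r : 'I_K -> nat -> T -> R) (tilde0 : 'I_K -> T -> R)
    (B alpha : nat) (Q : R -> R -> R -> R) :
  a < b -> 0 < sigma -> (1 <= B)%N -> (2 <= alpha)%N ->
  (* rewards: measurable, values in [a,b], mean mu_j, sigma^2-subgaussian,
     identically distributed within each arm, all mutually independent *)
  (forall j k, measurable_fun setT (r j k)) ->
  (forall j k w, a <= r j k w <= b) ->
  (forall j k, (\int[P]_w (r j k w)%:E = (mu j)%:E)%E) ->
  (forall j k (t : R), 0 < t ->
     (P [set w | (t < `|r j k w - mu j|)%R]
       <= ((2 * expR (- (t ^+ 2) / (2 * sigma ^+ 2)))%R)%:E)%E) ->
  (forall j k (A : set R), measurable A ->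
     P (r j k @^-1` A) = P (r j 0%N @^-1` A)) ->
  mutually_independent P (fun jk : 'I_K * nat => r jk.1 jk.2) ->
  (* tilde mu_{j,0} uniform on [a,b] *)
  (forall j, measurable_fun setT (tilde0 j)) ->
  (forall j w, a <= tilde0 j w <= b) ->
  (forall j (A : set R), measurable A ->
     P (tilde0 j @^-1` A)
     = (lebesgue_measure (A `&` `[a, b]) * ((b - a)^-1)%:E)%E) ->
  is_quantizer B Q ->
  forall (j : 'I_K) (delta : R), 0 < delta ->
  \bigcup_(i in [set i : nat | (0 < i)%N])
     [set w | Ubound K alpha B a b sigma delta i
              < `|tildemu K alpha B a b sigma delta Q (r j ^~ w) (tilde0 j w) i
                  - mu j|]
  `<=`
  \bigcup_(i in [set i : nat | (0 < i)%N])
     [set w | Uprime K alpha sigma delta i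
              < `|hatmu alpha (r j ^~ w) i - mu j|].
Proof.
move=> _ sigma_gt0 _ alpha_ge2 _ r_ab _ _ _ _ _ t0_ab _ hQ j delta _ w [i i_gt0 far].
apply: contrapT => no_hat_far.
have hat_near n : (0 < n)%N -> `|hatmu alpha (r j ^~ w) n - mu j| <= Uprime K alpha sigma delta n.
  by move=> n_gt0; rewrite leNgt; apply/negP => hn; apply: no_hat_far; exists n.
have alpha_gt0 : (0 < alpha)%N by apply: leq_trans alpha_ge2.
have tracks := tildemu_tracks (m := mu j) (t0 := tilde0 j w) (rew := r j ^~ w)
  (ltW sigma_gt0) alpha_gt0 hQ (fun k => r_ab j k w) (t0_ab j w) hat_near i_gt0.
by move: tracks; rewrite leNgt far.
Qed.
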